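(* Let $\phi(u)=\frac{1}{\sqrt{2\pi}}e^{-u^2/2}$ and $Q(u)=\int_u^{\infty}\phi(t)\,dt$. (i) (DCO-OFDM) Fix $\sigma_y>0$ and $\epsilon_{top}\in\mathbb{R}$. The function $$P_{DCO}(\epsilon_B)=\epsilon_B\sigma_y+\sigma_y\big[\phi(\epsilon_B)-\phi(\epsilon_{top}-\epsilon_B)+(\epsilon_{top}-\epsilon_B)\phi(\epsilon_{top}-\epsilon_B)-\epsilon_B Q(\epsilon_B)\big],\qquad \epsilon_B\in\mathbb{R},$$ is not convex. (ii) (ACO-OFDM) Fix $y_{max}>0$ and an integer $m\ge 1$. For $\mathbf{w}=(w_1,\dots,w_m)\in\mathbb{R}^m\setminus\{0\}$ let $\sigma_y=\sqrt{\sum_{i=1}^m w_i^2}$ and $\epsilon_{top}=y_{max}/\sigma_y$. The function $$P_{ACO}(\mathbf{w})=\frac{\sigma_y}{\sqrt{2\pi}}+\sigma_y\big[\epsilon_{top}Q(\epsilon_{top})-\phi(\epsilon_{top})\big]$$ is not convex on $\mathbb{R}^m\setminus\{0\}$, i.e., there is a line segment contained in $\mathbb{R}^m\setminus\{0\}$ on which the restriction of $P_{ACO}$ is not convex.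
   Context: These functions are the mean transmitted optical power constraints in the subcarrier power allocation problems: for DCO-OFDM, $P_{DCO}=B_{DC}+\beta_{DCO}$ with DC bias $B_{DC}=\epsilon_B\sigma_y$, bias level $\epsilon_B$, top clipping level $\epsilon_{top}$ (peak power $y_{max}=\epsilon_{top}\sigma_y$), and $\sigma_y$ the RMS of the time-domain OFDM signal; for ACO-OFDM, $\sigma_y=\sqrt{\sum w_i^2}$ where $w_i$ are the subcarrier amplitude scale coefficients and $y_{max}$ is the fixed peak power. The lemma asserts that these constraint functions are non-convex. *)

From HB Require Import structures.
From mathcomp Require Import all_boot all_order all_algebra.
From mathcomp Require Import all_classical all_reals all_analysis.
Set Implicit Arguments. Unset Strict Implicit. Unset Printing Implicit Defensive.
Import Order.TTheory GRing.Theory Num.Theory.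
Import numFieldNormedType.Exports.
Local Open Scope classical_set_scope.
Local Open Scope ring_scope.

Definition phi {R : realType} (u : R) : R :=
  (Num.sqrt (2 * pi))^-1 * expR (- (u ^+ 2) / 2).

Definition Qf {R : realType} (u : R) : R :=
  (\int[@lebesgue_measure R]_(t in `[u, +oo[) phi t)%R.

Definition P_DCO {R : realType} (sy etop eB : R) : R :=
  eB * sy + sy * (phi eB - phi (etop - eB) + (etop - eB) * phi (etop - eB)
                  - eB * Qf eB).

Definition sigma_y {R : realType} (m : nat) (w : 'rV[R]_m) : R :=
  Num.sqrt (\sum_(i < m) w 0 i ^+ 2).

Definition P_ACO {R : realType} (ymax : R) (m : nat) (w : 'rV[R]_m) : R :=
  let s := sigma_y w in
  let etop := ymax / s in
  s / Num.sqrt (2 * pi) + s * (etop * Qf etop - phi etop).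

Definition convex_on_R {R : realType} (f : R -> R) : Prop :=
  forall (x y t : R), 0 <= t <= 1 ->
    f (t * x + (1 - t) * y) <= t * f x + (1 - t) * f y.

(* convexity of f on the (non-convex) set R^m \ {0}: along every line segment
   contained in R^m \ {0}, f satisfies Jensen's inequality *)
Definition convex_on_nonzero {R : realType} (m : nat) (f : 'rV[R]_m -> R) : Prop :=
  forall (x y : 'rV[R]_m),
    (forall s : R, 0 <= s <= 1 -> s *: x + (1 - s) *: y != 0) ->
    forall t : R, 0 <= t <= 1 ->
      f (t *: x + (1 - t) *: y) <= t * f x + (1 - t) * f y.

(* (i) P_DCO = sy (eB + G eB + k (etop - eB)), where G u = phi u - u Q u is the
   standard normal loss function and k u = (u - 1) phi u.  Since G'' = phi <= phi 0,
   the second difference of G with step 1/2 is at most phi 0 / 4, whereas around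
   eB = etop - 1 the term k contributes (phi (3/2) - phi (1/2)) / 2 < - phi 0 / 4,
   so midpoint convexity fails there.
   (ii) On the ray w = t (1, ..., 1) one has sigma_y = t sqrt m, and P_ACO equals
   ymax (r phi 0 + Q (1/r) - r phi (1/r)) with r = sigma_y / ymax.  Midpoint
   convexity of this profile fails at r = 1, 16, 31: after splitting Q at 1/31, 1/16
   and 1, bounding the two integrals of phi by the monotonicity of phi on [0, +oo[
   leaves a numerical inequality between three values of phi. *)

From HB Require Import structures.
From mathcomp Require Import all_boot all_order all_algebra.
From mathcomp Require Import all_classical all_reals all_analysis.
From mathcomp Require Import ring lra.
Import Order.TTheory GRing.Theory Num.Theory.
Import numFieldNormedType.Exports.
Set Implicit Arguments.
Unset Strict Implicit.
Local Open Scope ring_scope.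

Section optical_power.
Variable R : realType.
Notation mu := (@lebesgue_measure R).
Implicit Types a b c h t u v : R.

Lemma phi0E : phi 0 = (Num.sqrt (2 * pi))^-1 :> R.
Proof. by rewrite /phi expr0n /= oppr0 mul0r expR0 mulr1. Qed.

Lemma phiE u : phi u = phi 0 * expR (- (u ^+ 2 / 2)).
Proof. by rewrite phi0E /phi mulNr. Qed.

Lemma phi0_gt0 : 0 < phi (0 : R).
Proof. by rewrite phi0E invr_gt0 sqrtr_gt0 mulr_gt0 ?pi_gt0. Qed.

Lemma phi_le_phi0 u : phi u <= phi 0.
Proof.
rewrite phiE ler_piMr ?(ltW phi0_gt0) // expR_le1 oppr_le0.
by rewrite divr_ge0 ?sqr_ge0.
Qed.

Lemma phi_le u v : 0 <= u <= v -> phi v <= phi u.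
Proof.
move=> /andP[u0 uv]; rewrite [phi v]phiE [phi u]phiE ler_pM2l ?phi0_gt0 //.
by rewrite ler_expR lerN2 ler_pM2r ?invr_gt0 // ler_sqr // nnegrE (le_trans u0).
Qed.

Lemma phi_normal_pdf : phi = normal_pdf 0 1 :> (R -> R).
Proof.
apply/funext => u; rewrite /normal_pdf oner_eq0 /normal_peak /normal_fun.
by rewrite subr0 expr1n mul1r /phi mulr_natl.
Qed.

Lemma continuous_phi : continuous (@phi R).
Proof. by rewrite phi_normal_pdf; apply: continuous_normal_pdf; rewrite oner_eq0. Qed.

Lemma integrable_phi (A : set R) : measurable A ->
  mu.-integrable A (EFin \o phi).
Proof.
move=> mA; apply: (@integrableS _ _ _ mu setT) => //.
by rewrite phi_normal_pdf; exact: integrable_normal_pdf.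
Qed.

Lemma is_derive_phi t : is_derive t 1 (@phi R) (- t * phi t).
Proof.
have -> : @phi R = phi 0 \*: (expR \o (fun u => - (u ^+ 2 / 2))).
  by apply/funext => u; rewrite phiE.
have dsq : is_derive t 1 (fun u : R => - (u ^+ 2 / 2)) (- t).
  apply: is_derive_eq.
  by rewrite !scaler0 add0r -[t%:A]/(t * 1) -[_ *: _]/(_ * _); field.
apply: is_derive_eq (is_deriveZ (phi 0) (is_derive1_comp (is_derive_expR _) dsq)) _.
by rewrite /= -[_ *: _]/(_ * _) -[phi 0 *: _]/(phi 0 * _); ring.
Qed.

#[local] Hint Resolve is_derive_phi : typeclass_instances.

Lemma derivable_continuous (f : R -> R) : (forall t, derivable f t 1) -> continuous f.
Proof. by move=> df t; apply/differentiable_continuous/derivable1_diffP. Qed.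

Lemma integrable_continuous_itv (f : R -> R) a b : continuous f ->
  mu.-integrable `[a, b] (EFin \o f).
Proof.
move=> cf; apply: continuous_compact_integrable; first exact: segment_compact.
exact: continuous_subspaceT.
Qed.

Lemma Rintegral_FTC (f F : R -> R) a b : a < b -> continuous f ->
  (forall t, is_derive t 1 F (f t)) -> \int[mu]_(t in `[a, b]) f t = F b - F a.
Proof.
move=> ab cf dF.
have cF : continuous F by apply: derivable_continuous => t; exact: ex_derive.
rewrite /Rintegral (continuous_FTC2 (F := F)) //; first exact: continuous_subspaceT.
split; first by move=> x _; exact: ex_derive.
- exact/cvg_at_right_filter/cF.
- exact/cvg_at_left_filter/cF.
by move=> x _; rewrite derive1E derive_val.
Qed.

Lemma Qf_split a b : a <= b -> Qf a = \int[mu]_(t in `[a, b]) phi t + Qf b.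
Proof.
move=> ab; have iab := @integrable_phi `[a, +oo[ (measurable_itv _).
rewrite /Qf -(@Rintegral_itv_obnd_cbnd _ b); last exact: integrable_phi.
by rewrite -(@Rintegral_itvB _ _ _ _ b iab) ?bnd_simp // addrC subrK.
Qed.

Lemma Rintegral_cst_itv a b (M : R) : a <= b ->
  \int[mu]_(t in `[a, b]) M = M * (b - a).
Proof.
move=> ab; rewrite Rintegral_cst //.
have := lebesgue_measure_itv `[a, b]%R; rewrite /= lte_fin => ->.
case: ltP => [_ //| ba]; suff -> : b = a by rewrite subrr.
by apply/eqP; rewrite eq_le ba ab.
Qed.

Lemma Rintegral_phi_le a b : 0 <= a <= b ->
  \int[mu]_(t in `[a, b]) phi t <= phi a * (b - a).
Proof.
move=> /andP[a0 ab]; rewrite -Rintegral_cst_itv //.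
apply: le_Rintegral => //; first exact: integrable_phi.
  exact/integrable_continuous_itv/cst_continuous.
by move=> t; rewrite /= in_itv /= => /andP[ta _]; apply: phi_le; rewrite a0.
Qed.

Lemma Rintegral_phi_ge a b : 0 <= a <= b ->
  phi b * (b - a) <= \int[mu]_(t in `[a, b]) phi t.
Proof.
move=> /andP[a0 ab]; rewrite -Rintegral_cst_itv //.
apply: le_Rintegral => //; last first.
- move=> t; rewrite /= in_itv /= => /andP[ta tb].
  by apply: phi_le; rewrite tb (le_trans a0 ta).
- exact: integrable_phi.
- exact/integrable_continuous_itv/cst_continuous.
Qed.

(* The left side is the integral of (al t + be) phi t, as t phi t = - phi' t. *)
Lemma Rintegral_affine_phi_le al be a b : a < b ->
  (forall t, a <= t <= b -> 0 <= al * t + be) ->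
  al * (phi a - phi b) + be * \int[mu]_(t in `[a, b]) phi t <=
  phi 0 * (al * (b ^+ 2 - a ^+ 2) / 2 + be * (b - a)).
Proof.
move=> ab w_ge0.
pose g t := (al * t + be) * phi 0 - al * (t * phi t).
have dG t :
    is_derive t 1 (fun u => phi 0 * (al * u ^+ 2 / 2 + be * u) + al * phi u) (g t).
  apply: is_derive_eq; rewrite /g !scaler0 add0r -[t%:A]/(t * 1) -[be%:A]/(be * 1).
  by rewrite -![_ *: _]/(_ * _); field.
have cg : continuous g by apply: derivable_continuous => x; rewrite /g; exact: ex_derive.
have Ig := Rintegral_FTC ab cg dG.
have : 0 <= \int[mu]_(t in `[a, b]) (g t - be * phi t).
  apply: Rintegral_ge0 => t; rewrite /= in_itv /= => /w_ge0 wt.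
  have := phi_le_phi0 t; rewrite /g; nra.
rewrite RintegralB //; last 2 first.
- exact: integrable_continuous_itv.
- apply: integrable_continuous_itv => t.
  by apply: continuousM; [exact: cvg_cst | exact: continuous_phi].
rewrite RintegralZl //; last exact: integrable_phi.
rewrite Ig; lra.
Qed.

(* The standard normal loss function E[(X - u)^+]; its second derivative is phi. *)
Definition normal_loss u := phi u - u * Qf u.

Lemma normal_loss_second_diff_le c h : 0 < h ->
  normal_loss (c - h) + normal_loss (c + h) - 2 * normal_loss c <= phi 0 * h ^+ 2.
Proof.
move=> h0; have lt_l : c - h < c by lra.
have lt_r : c < c + h by lra.
have QE_l := Qf_split (ltW lt_l).
have QE_r : Qf (c + h) = Qf c - \int[mu]_(t in `[c, c + h]) phi t.
  by rewrite (Qf_split (ltW lt_r)); ring.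
have B_l := @Rintegral_affine_phi_le 1 (h - c) _ _ lt_l ltac:(move=> t; lra).
have B_r := @Rintegral_affine_phi_le (-1) (c + h) _ _ lt_r ltac:(move=> t; lra).
rewrite /normal_loss QE_l QE_r; nra.
Qed.

Lemma P_DCOE (sy etop e : R) :
  P_DCO sy etop e = sy * (e + normal_loss e + (etop - e - 1) * phi (etop - e)).
Proof. by rewrite /P_DCO /normal_loss; ring. Qed.

Lemma convex_on_R_midpoint (f : R -> R) :
  convex_on_R f -> forall c h, 2 * f c <= f (c - h) + f (c + h).
Proof.
move=> cvx c h; have := cvx (c - h) (c + h) (1 / 2).
have -> : 1 / 2 * (c - h) + (1 - 1 / 2) * (c + h) = c by field.
by move=> /(_ ltac:(lra)); lra.
Qed.

Lemma phi_half_sub_gt : phi 0 / 2 < phi (1 / 2) - phi (3 / 2) :> R.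
Proof.
have e_gt : 7 / 3 < expR (1 : R).
  have -> : expR (1 : R) = expR (1 / 4) ^+ 2 ^+ 2.
    by rewrite -exprM -expRM_natl; congr expR; field.
  have u_ge := expR_ge1Dx (1 / 4 : R); set u := expR _ in u_ge *.
  have u2_ge : 25 / 16 <= u ^+ 2 by rewrite expr2; nra.
  by rewrite [_ ^+ 2 ^+ 2]expr2; nra.
have x_gt : 7 / 8 < expR (- (1 / 8) : R).
  by have := @expR_gt1Dx R (- (1 / 8)); lra.
have y_lt : expR (- 1 : R) < 3 / 7.
  rewrite expRN; have := expR_gt0 (1 : R).
  by rewrite invf_plt ?posrE ?expR_gt0 // invf_div.
have -> : phi (3 / 2 : R) = phi (1 / 2) * expR (- 1).
  rewrite [phi (3 / 2)]phiE [phi (1 / 2)]phiE -mulrA -expRD.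
  by congr (_ * expR _); field.
have -> : phi (1 / 2 : R) = phi 0 * expR (- (1 / 8)).
  by rewrite [phi (1 / 2)]phiE; congr (_ * expR _); field.
have xy_gt : 0 < expR (- (1 / 8)) * (1 - expR (- 1)) - 1 / 2 :> R by nra.
by have := mulr_gt0 phi0_gt0 xy_gt; lra.
Qed.

Theorem P_DCO_not_convex (sy etop : R) :
  0 < sy -> ~ convex_on_R (P_DCO sy etop).
Proof.
move=> sy0 /convex_on_R_midpoint/(_ (etop - 1) (1 / 2)); rewrite !P_DCOE.
have -> : etop - (etop - 1) = 1 by ring.
have -> : etop - (etop - 1 - 1 / 2) = 3 / 2 by field.
have -> : etop - (etop - 1 + 1 / 2) = 1 / 2 by field.
have := @normal_loss_second_diff_le (etop - 1) (1 / 2) ltac:(lra).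
rewrite -subr_ge0 => /(mulr_ge0 (ltW sy0)).
have := phi_half_sub_gt; rewrite -subr_gt0 => /(mulr_gt0 sy0).
lra.
Qed.

Lemma expRN_le_inv (x : R) : 0 <= x -> expR (- x) <= (1 + x)^-1.
Proof.
move=> x0; rewrite expRN lef_pV2 ?posrE ?expR_gt0 ?expR_ge1Dx //.
by rewrite ltr_wpDr.
Qed.

Lemma phi_inv16_lt :
  32 * phi 16^-1 < 31 / 16 * phi 1 + (31 - 15 / 496) * phi 31^-1 :> R.
Proof.
rewrite [phi 16^-1]phiE [phi 1]phiE [phi 31^-1]phiE.
have -> : (16^-1 : R) ^+ 2 / 2 = 512^-1 by field.
have -> : (1 : R) ^+ 2 / 2 = 2^-1 by rewrite expr1n mul1r.
have -> : (31^-1 : R) ^+ 2 / 2 = 1922^-1 by field.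
have x_le : expR (- 512^-1 : R) <= 512 / 513.
  have -> : (512 / 513 : R) = (1 + 512^-1)^-1 by field.
  by apply: expRN_le_inv; lra.
have y_ge : 9 / 16 <= expR (- 2^-1 : R).
  have -> : expR (- 2^-1 : R) = expR (- 4^-1) ^+ 2.
    by rewrite -expRM_natl; congr expR; field.
  have := expR_ge1Dx (- 4^-1 : R); rewrite expr2; nra.
have z_ge := expR_ge1Dx (- 1922^-1 : R).
have : 32 * expR (- 512^-1) <
       31 / 16 * expR (- 2^-1) + (31 - 15 / 496) * expR (- 1922^-1) :> R by lra.
rewrite -subr_gt0 => /(mulr_gt0 phi0_gt0); lra.
Qed.

Definition aco_profile (r : R) := r * phi 0 + Qf r^-1 - r * phi r^-1.

Lemma aco_profile_midpoint_gt :
  aco_profile 1 + aco_profile 31 < 2 * aco_profile 16.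
Proof.
rewrite /aco_profile invr1.
have Q_lo := @Qf_split 31^-1 16^-1 ltac:(lra).
have Q_hi := @Qf_split 16^-1 1 ltac:(lra).
have I_lo := @Rintegral_phi_le 31^-1 16^-1 ltac:(lra).
have I_hi := @Rintegral_phi_ge 16^-1 1 ltac:(lra).
have := phi_inv16_lt; lra.
Qed.

Section aco_ray.
Variables (ymax : R) (m : nat).
Hypotheses (ymax_gt0 : 0 < ymax) (m_gt0 : (0 < m)%N).

Definition aco_ray (r : R) : 'rV[R]_m := (r * ymax / Num.sqrt m%:R) *: const_mx 1.

Let sqrtm_gt0 : 0 < Num.sqrt (m%:R : R).
Proof. by rewrite sqrtr_gt0 ltr0n. Qed.

Lemma sigma_y_aco_ray r : 0 <= r -> sigma_y (aco_ray r) = r * ymax.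
Proof.
move=> r0; rewrite /sigma_y; under eq_bigr do rewrite !mxE mulr1.
rewrite sumr_const card_ord -[_ *+ m]mulr_natr sqrtrM ?sqr_ge0 // sqrtr_sqr ger0_norm.
  by rewrite mulfVK // gt_eqF.
by apply: divr_ge0; [apply: mulr_ge0 => //; exact: ltW | exact: sqrtr_ge0].
Qed.

Lemma P_ACO_aco_ray r : 0 < r -> P_ACO ymax (aco_ray r) = ymax * aco_profile r.
Proof.
move=> r0; rewrite /P_ACO /= sigma_y_aco_ray ?ltW // /aco_profile.
rewrite -phi0E.
have -> : ymax / (r * ymax) = r^-1 by field; rewrite !gt_eqF.
by field; rewrite gt_eqF.
Qed.

Lemma aco_ray_neq0 r : 0 < r -> aco_ray r != 0.
Proof.
move=> r0; apply/eqP => /matrixP/(_ 0 (Ordinal m_gt0)).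
rewrite !mxE mulr1 => /eqP.
by rewrite gt_eqF // divr_gt0 ?mulr_gt0.
Qed.

Lemma aco_ray_convex_comb s r1 r2 :
  s *: aco_ray r1 + (1 - s) *: aco_ray r2 = aco_ray (s * r1 + (1 - s) * r2).
Proof. by rewrite /aco_ray !scalerA -scalerDl; congr (_ *: _); ring. Qed.

Lemma P_ACO_not_convex : ~ convex_on_nonzero (@P_ACO R ymax m).
Proof.
move=> cvx.
have seg s : 0 <= s <= 1 -> s *: aco_ray 1 + (1 - s) *: aco_ray 31 != 0.
  by move=> s01; rewrite aco_ray_convex_comb aco_ray_neq0 //; lra.
have := cvx _ _ seg (1 / 2) ltac:(lra).
rewrite aco_ray_convex_comb.
have -> : 1 / 2 * 1 + (1 - 1 / 2) * 31 = 16 :> R by field.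
rewrite !P_ACO_aco_ray; try lra.
have := aco_profile_midpoint_gt; rewrite -subr_gt0 => /(mulr_gt0 ymax_gt0); lra.
Qed.

End aco_ray.

End optical_power.

Theorem lemma1 (R : realType) :
  (forall sy etop : R, 0 < sy -> ~ convex_on_R (P_DCO sy etop)) /\
  (forall (ymax : R) (m : nat), 0 < ymax -> (1 <= m)%N ->
     ~ convex_on_nonzero (@P_ACO R ymax m)).
Proof.
split=> [sy etop | ymax m]; [exact: P_DCO_not_convex | exact: P_ACO_not_convex].
Qed.
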